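(* The singular braid monoid $SB_n$ has a presentation with generators $a_{ts},a_{ts}^{-1}$ for $1\le s<t\le n$ and $b_{qp}$ for $1\le p<q\le n$, and relations $$\begin{aligned} &a_{ts}a_{rq}=a_{rq}a_{ts}\ \text{ for } (t-r)(t-q)(s-r)(s-q)>0,\\ &a_{ts}a_{sr}=a_{tr}a_{ts}=a_{sr}a_{tr}\ \text{ for } 1\le r<s<t\le n,\\ &a_{ts}a_{ts}^{-1}=a_{ts}^{-1}a_{ts}=1\ \text{ for } 1\le s<t\le n,\\ &a_{ts}b_{rq}=b_{rq}a_{ts}\ \text{ for } (t-r)(t-q)(s-r)(s-q)>0,\\ &a_{ts}b_{ts}=b_{ts}a_{ts}\ \text{ for } 1\le s<t\le n,\\ &a_{ts}b_{sr}=b_{tr}a_{ts},\quad a_{sr}b_{tr}=b_{ts}a_{sr},\quad a_{tr}b_{ts}=b_{sr}a_{tr}\ \text{ for } 1\le r<s<t\le n,\\ &b_{ts}b_{rq}=b_{rq}b_{ts}\ \text{ for } (t-r)(t-q)(s-r)(s-q)>0, \end{aligned}$$ where the generators correspond to the following elements of $SB_n$: $a_{ts}=(\sigma_{t-1}\cdots\sigma_{s+1})\sigma_s(\sigma_{s+1}^{-1}\cdots\sigma_{t-1}^{-1})$, $a_{ts}^{-1}=(\sigma_{t-1}\cdots\sigma_{s+1})\sigma_s^{-1}(\sigma_{s+1}^{-1}\cdots\sigma_{t-1}^{-1})$, $b_{qp}=(\sigma_{q-1}\cdots\sigma_{p+1})x_p(\sigma_{p+1}^{-1}\cdots\sigma_{q-1}^{-1})$.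 That is, the assignment of these elements to the generators induces an isomorphism from the monoid so presented onto $SB_n$.
   Context: Fix $n\ge 2$. $SB_n$ is the monoid with generators $\sigma_i,\sigma_i^{-1},x_i$ ($i=1,\dots,n-1$) and relations: $\sigma_i\sigma_j=\sigma_j\sigma_i$ and $x_ix_j=x_jx_i$ if $|i-j|>1$; $x_i\sigma_j=\sigma_jx_i$ if $|i-j|\ne1$; $\sigma_i\sigma_{i+1}\sigma_i=\sigma_{i+1}\sigma_i\sigma_{i+1}$; $\sigma_i\sigma_{i+1}x_i=x_{i+1}\sigma_i\sigma_{i+1}$; $\sigma_{i+1}\sigma_ix_{i+1}=x_i\sigma_{i+1}\sigma_i$; $\sigma_i\sigma_i^{-1}=\sigma_i^{-1}\sigma_i=1$. *)

From mathcomp Require Import all_boot all_order all_algebra.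
Set Implicit Arguments. Unset Strict Implicit. Unset Printing Implicit Defensive.
Import GRing.Theory Num.Theory.

(* Monoid presentations: the free monoid on a letter type L is [seq L]
   (concatenation, unit [::]); the monoid presented by relations R is the
   quotient of the free monoid by the congruence generated by R. *)
Inductive cong (L : Type) (R : seq L -> seq L -> Prop) : seq L -> seq L -> Prop :=
| cong_step (u v l r : seq L) : R l r -> cong R (u ++ l ++ v) (u ++ r ++ v)
| cong_refl (w : seq L) : cong R w w
| cong_sym (w1 w2 : seq L) : cong R w1 w2 -> cong R w2 w1
| cong_trans (w1 w2 w3 : seq L) : cong R w1 w2 -> cong R w2 w3 -> cong R w1 w3.

(* Sg i = sigma_i, Sgi i = sigma_i^{-1}, X i = x_i, for 1 <= i <= n-1. *)
Inductive sbletter := Sg of nat | Sgi of nat | X of nat.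

Definition sb_idx (n i : nat) : bool := (1 <= i) && (i <= n.-1).

Definition sb_valid_letter (n : nat) (c : sbletter) : bool :=
  match c with Sg i | Sgi i | X i => sb_idx n i end.

Definition sb_valid (n : nat) (w : seq sbletter) : bool := all (sb_valid_letter n) w.

Inductive sb_rel (n : nat) : seq sbletter -> seq sbletter -> Prop :=
| sbr_ss i j : sb_idx n i -> sb_idx n j -> (i.+1 < j) || (j.+1 < i) ->
    sb_rel n [:: Sg i; Sg j] [:: Sg j; Sg i]
| sbr_xx i j : sb_idx n i -> sb_idx n j -> (i.+1 < j) || (j.+1 < i) ->
    sb_rel n [:: X i; X j] [:: X j; X i]
| sbr_xs i j : sb_idx n i -> sb_idx n j -> (i.+1 != j) && (j.+1 != i) ->
    sb_rel n [:: X i; Sg j] [:: Sg j; X i]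
| sbr_braid i : sb_idx n i -> sb_idx n i.+1 ->
    sb_rel n [:: Sg i; Sg i.+1; Sg i] [:: Sg i.+1; Sg i; Sg i.+1]
| sbr_sx1 i : sb_idx n i -> sb_idx n i.+1 ->
    sb_rel n [:: Sg i; Sg i.+1; X i] [:: X i.+1; Sg i; Sg i.+1]
| sbr_sx2 i : sb_idx n i -> sb_idx n i.+1 ->
    sb_rel n [:: Sg i.+1; Sg i; X i.+1] [:: X i; Sg i.+1; Sg i]
| sbr_inv1 i : sb_idx n i -> sb_rel n [:: Sg i; Sgi i] [::]
| sbr_inv2 i : sb_idx n i -> sb_rel n [:: Sgi i; Sg i] [::].

Definition SBeq (n : nat) := cong (sb_rel n).

(* A t s = a_{ts}, Ai t s = a_{ts}^{-1} (1 <= s < t <= n), B q p = b_{qp} (1 <= p < q <= n). *)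
Inductive abletter := A of nat & nat | Ai of nat & nat | B of nat & nat.

Definition pair_ok (n t s : nat) : bool := (1 <= s) && (s < t) && (t <= n).

Definition ab_valid_letter (n : nat) (c : abletter) : bool :=
  match c with A t s | Ai t s | B t s => pair_ok n t s end.

Definition ab_valid (n : nat) (w : seq abletter) : bool := all (ab_valid_letter n) w.

Definition sep (t s r q : nat) : bool :=
  (0 < (t%:Z - r%:Z) * (t%:Z - q%:Z) * (s%:Z - r%:Z) * (s%:Z - q%:Z))%R.

Inductive ab_rel (n : nat) : seq abletter -> seq abletter -> Prop :=
| abr_aa t s r q : pair_ok n t s -> pair_ok n r q -> sep t s r q ->
    ab_rel n [:: A t s; A r q] [:: A r q; A t s]
| abr_aaa1 r s t : 1 <= r -> r < s -> s < t -> t <= n ->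
    ab_rel n [:: A t s; A s r] [:: A t r; A t s]
| abr_aaa2 r s t : 1 <= r -> r < s -> s < t -> t <= n ->
    ab_rel n [:: A t r; A t s] [:: A s r; A t r]
| abr_inv1 t s : pair_ok n t s -> ab_rel n [:: A t s; Ai t s] [::]
| abr_inv2 t s : pair_ok n t s -> ab_rel n [:: Ai t s; A t s] [::]
| abr_ab t s r q : pair_ok n t s -> pair_ok n r q -> sep t s r q ->
    ab_rel n [:: A t s; B r q] [:: B r q; A t s]
| abr_ab_same t s : pair_ok n t s -> ab_rel n [:: A t s; B t s] [:: B t s; A t s]
| abr_ab1 r s t : 1 <= r -> r < s -> s < t -> t <= n ->
    ab_rel n [:: A t s; B s r] [:: B t r; A t s]
| abr_ab2 r s t : 1 <= r -> r < s -> s < t -> t <= n ->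
    ab_rel n [:: A s r; B t r] [:: B t s; A s r]
| abr_ab3 r s t : 1 <= r -> r < s -> s < t -> t <= n ->
    ab_rel n [:: A t r; B t s] [:: B s r; A t r]
| abr_bb t s r q : pair_ok n t s -> pair_ok n r q -> sep t s r q ->
    ab_rel n [:: B t s; B r q] [:: B r q; B t s].

Definition ABeq (n : nat) := cong (ab_rel n).

(* sigma_{t-1} ... sigma_{s+1} *)
Definition conj_left (t s : nat) : seq sbletter := map Sg (rev (iota s.+1 (t - s.+1))).
(* sigma_{s+1}^{-1} ... sigma_{t-1}^{-1} *)
Definition conj_right (t s : nat) : seq sbletter := map Sgi (iota s.+1 (t - s.+1)).

Definition img (c : abletter) : seq sbletter :=
  match c with
  | A t s => conj_left t s ++ Sg s :: conj_right t s
  | Ai t s => conj_left t s ++ Sgi s :: conj_right t s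
  | B q p => conj_left q p ++ X p :: conj_right q p
  end.

Definition phi (w : seq abletter) : seq sbletter := flatten (map img w).

(* The inverse of [phi] is the letterwise substitution [psi] sending sigma_i, sigma_i^-1
   and x_i to a_{i+1,i}, a_{i+1,i}^-1 and b_{i+1,i}, so that [phi (psi u) = u] on the nose;
   [psi] maps each relation of SB_n to a short consequence of the new relations.
   Conversely a_{ts}, a_{ts}^-1 and b_{ts} are the conjugates [conjw t s] of sigma_s,
   sigma_s^-1 and x_s by sigma_{t-1} ... sigma_{s+1}, and every new relation is verified
   in SB_n by induction on the length of the conjugator, peeling one sigma off either end
   with a braid-type relation.  Finally [psi (phi c)] is equivalent to the generator [c]
   because a_{t+1,t} c_{ts} = c_{t+1,s} a_{t+1,t}, so [phi] and [psi] induce mutually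
   inverse isomorphisms. *)

From mathcomp Require Import all_boot all_order all_algebra zify ring.
From Stdlib Require Import Setoid Morphisms.
Set Implicit Arguments. Unset Strict Implicit. Unset Printing Implicit Defensive.

#[export] Hint Resolve cong_refl : core.

Section Congruence.
Variables (L : Type) (R : seq L -> seq L -> Prop).
Local Notation "u ≈ v" := (cong R u v) (at level 70).

Lemma cong_ctx u v a b : a ≈ b -> u ++ a ++ v ≈ u ++ b ++ v.
Proof.
elim=> {a b} [u0 v0 l r lr | w | w1 w2 _ IH | w1 w2 w3 _ IH1 _ IH2].
- by have := cong_step (u ++ u0) (v0 ++ v) lr; rewrite -!catA.
- exact: cong_refl.
- exact: cong_sym.
- exact: cong_trans IH1 IH2.
Qed.

#[global] Instance cong_equiv : Equivalence (cong R).
Proof. split; [exact: cong_refl | exact: cong_sym | exact: cong_trans]. Qed.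

#[global] Instance cat_cong : Proper (cong R ==> cong R ==> cong R) (@cat L).
Proof.
move=> a b ab c d cd; transitivity (b ++ c); first exact: (cong_ctx [::] c ab).
by have := cong_ctx b [::] cd; rewrite !cats0.
Qed.

#[global] Instance cons_cong x : Proper (cong R ==> cong R) (cons x).
Proof. by move=> a b ab; have := cong_ctx [:: x] [::] ab; rewrite !cats0. Qed.

Lemma cong_rel l r u : R l r -> l ++ u ≈ r ++ u.
Proof. by move=> lr; have := cong_step [::] u lr. Qed.

Lemma cong_conj_inv x y z y' z' :
  (forall u, x ++ y ++ u ≈ z ++ x ++ u) -> (forall u, y ++ y' ++ u ≈ u) ->
  (forall u, z' ++ z ++ u ≈ u) -> forall u, x ++ y' ++ u ≈ z' ++ x ++ u.
Proof.
move=> xy yy' z'z u; transitivity (z' ++ z ++ x ++ y' ++ u); first by rewrite z'z.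
by rewrite -xy yy'.
Qed.

End Congruence.

Lemma cong_hom (L L' : Type) (R : seq L -> seq L -> Prop) (R' : seq L' -> seq L' -> Prop)
    (h : seq L -> seq L') :
  {morph h : u v / u ++ v} -> (forall l r, R l r -> cong R' (h l) (h r)) ->
  forall u v, cong R u v -> cong R' (h u) (h v).
Proof.
move=> hcat hR u v; elim=> [u0 v0 l r lr | w | w1 w2 _ IH | w1 w2 w3 _ IH1 _ IH2].
- by rewrite !hcat (hR _ _ lr).
- exact: cong_refl.
- exact: cong_sym.
- exact: cong_trans IH1 IH2.
Qed.

Definition far (i j : nat) : bool := (i.+1 < j) || (j.+1 < i).

Section Separation.
Import Order.TTheory GRing.Theory Num.Theory.
Local Open Scope ring_scope.

(* Its sign tells whether [x] lies outside, strictly inside, or at an end of [[s, t]]. *)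
Definition side (s t x : nat) : int := (t%:Z - x%:Z) * (s%:Z - x%:Z).

Lemma side_sign (s t x : nat) : (s < t)%N ->
  [\/ ((x < s)%N || (t < x)%N) && (0 < side s t x),
      (s < x < t)%N && (side s t x < 0) | side s t x == 0].
Proof.
rewrite /side => st.
have [xs|sx] := ltnP x s; first by constructor 1; apply/andP; split => //; nia.
have [tx|xt] := ltnP t x; first by constructor 1; apply/andP; split; [rewrite orbT|nia].
have [<-|ns] := eqVneq s x; first by constructor 3; rewrite subrr mulr0.
have [->|nt] := eqVneq x t; first by constructor 3; rewrite subrr mul0r.
by constructor 2; apply/andP; split; [lia|nia].
Qed.

Lemma sepE t s r q : sep t s r q = (0 < side s t r * side s t q).
Proof. by rewrite /sep /side; congr (_ < _); ring. Qed.

Lemma sep_cases t s r q : (s < t)%N -> (q < r)%N -> sep t s r q ->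
  [|| r < s, t < q, (q < s) && (t < r) | (s < q) && (r < t)]%N.
Proof.
move=> st qr; rewrite sepE.
by case: (side_sign r st) (side_sign q st)
  => [/andP[? ?]|/andP[? ?]|/eqP->] [/andP[? ?]|/andP[? ?]|/eqP->];
  rewrite ?mulr0 ?mul0r ?ltxx //; nia.
Qed.

Lemma sep_far i j : far i j -> sep i.+1 i j.+1 j.
Proof. by rewrite sepE /side => /orP[] ij; apply: mulr_gt0; nia. Qed.

End Separation.

Lemma gt_ind s (P : nat -> Prop) :
  P s.+1 -> (forall t, s < t -> P t -> P t.+1) -> forall t, s < t -> P t.
Proof.
move=> P1 PS; elim=> // t IH; rewrite ltnS leq_eqVlt => /predU1P[<- // | st].
exact: PS st (IH st).
Qed.

Lemma pair_okP n t s : pair_ok n t s -> [/\ 1 <= s, s < t & t <= n].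
Proof. by case/andP => /andP[]. Qed.

Definition sb_index (c : sbletter) : nat := match c with Sg i | Sgi i | X i => i end.

(* sigma and x obey the same braid-type relations, so most lemmas treat both at once. *)
Definition is_sx (y : nat -> sbletter) : Prop := y = Sg \/ y = X.

Lemma is_sx_Sg : is_sx Sg. Proof. by left. Qed.
Lemma is_sx_X : is_sx X. Proof. by right. Qed.
#[local] Hint Resolve is_sx_Sg is_sx_X : core.

Lemma sb_index_sx y i : is_sx y -> sb_index (y i) = i.
Proof. by case=> ->. Qed.

Definition conjw (t s : nat) (w : seq sbletter) : seq sbletter :=
  conj_left t s ++ w ++ conj_right t s.
Arguments conjw : simpl never.

Lemma imgA t s : img (A t s) = conjw t s [:: Sg s]. Proof. by []. Qed.
Lemma imgAi t s : img (Ai t s) = conjw t s [:: Sgi s]. Proof. by []. Qed.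
Lemma imgB t s : img (B t s) = conjw t s [:: X s]. Proof. by []. Qed.

Lemma conjw_small t s w : t <= s.+1 -> conjw t s w = w.
Proof.
by rewrite /conjw /conj_left /conj_right -subn_eq0 => /eqP->; rewrite cats0.
Qed.

Lemma conjwS t s w u : s < t -> conjw t.+1 s w ++ u = Sg t :: conjw t s w ++ Sgi t :: u.
Proof.
move=> st; rewrite /conjw /conj_left /conj_right.
have -> : t.+1 - s.+1 = (t - s.+1) + 1 by lia.
by rewrite iotaD rev_cat subnKC //= map_cat -!catA.
Qed.

Lemma conjw_index t s w : all (fun c => s <= sb_index c < t) w ->
  all (fun c => s <= sb_index c < t) (conjw t s w).
Proof.
move=> w_st; rewrite /conjw /conj_left /conj_right !all_cat w_st !all_map all_rev /=.
by apply/andP; split; apply/allP => k; rewrite mem_iota /=; lia.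
Qed.

Section SingularBraids.
Variable n : nat.
Local Notation "u ≈ v" := (SBeq n u v) (at level 70).
Local Ltac idx := rewrite /= ?sb_index_sx ?/sb_idx ?/far //; lia.

Lemma Sg_SgiK i : sb_idx n i -> forall u, Sg i :: Sgi i :: u ≈ u.
Proof. by move=> ni u; have := cong_rel u (sbr_inv1 ni). Qed.

Lemma Sgi_SgK i : sb_idx n i -> forall u, Sgi i :: Sg i :: u ≈ u.
Proof. by move=> ni u; have := cong_rel u (sbr_inv2 ni). Qed.

Definition commutes (v w : seq sbletter) : Prop := forall u, v ++ w ++ u ≈ w ++ v ++ u.

Lemma commutes_sym v w : commutes v w -> commutes w v.
Proof. by move=> vw u; symmetry. Qed.

Lemma commutes_all (P : pred sbletter) v w :
  all P v -> (forall c, P c -> commutes [:: c] w) -> commutes v w.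
Proof.
move=> + Pw; elim: v => [_ u // | c v IH /= /andP[Pc Pv] u].
by rewrite -cat1s -!catA IH // Pw.
Qed.

Lemma commutes_Sgi i w : sb_idx n i -> commutes [:: Sg i] w -> commutes [:: Sgi i] w.
Proof.
move=> ni /commutes_sym Sgw; apply: commutes_sym.
by apply: (cong_conj_inv Sgw) => u; [apply: Sg_SgiK | apply: Sgi_SgK].
Qed.

Lemma commutes_sx_far y z i j : is_sx y -> is_sx z -> sb_idx n i -> sb_idx n j -> far i j ->
  commutes [:: y i] [:: z j].
Proof.
move=> [->|->] [->|->] ni nj ij u.
- exact: cong_rel u (sbr_ss ni nj ij).
- by symmetry; apply: cong_rel u (sbr_xs nj ni _); move: ij; rewrite /far; lia.
- by apply: cong_rel u (sbr_xs ni nj _); move: ij; rewrite /far; lia.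
- exact: cong_rel u (sbr_xx ni nj ij).
Qed.

Lemma swap_far c d : sb_idx n (sb_index c) -> sb_idx n (sb_index d) ->
  far (sb_index c) (sb_index d) -> forall u, c :: d :: u ≈ d :: c :: u.
Proof.
move=> nc nd cd; change (commutes [:: c] [:: d]).
have far_sx z j : is_sx z -> sb_idx n j -> far (sb_index c) j -> commutes [:: c] [:: z j].
  case: c nc cd => i /= ni _ z_sx nj ij; [ | apply: commutes_Sgi => // | ];
  exact: commutes_sx_far.
case: d nd cd => j /= nj cj; [exact: far_sx | | exact: far_sx].
by apply/commutes_sym/commutes_Sgi/commutes_sym => //; exact: far_sx.
Qed.

Lemma commutes_sx_Sg y i : is_sx y -> sb_idx n i -> commutes [:: y i] [:: Sg i].
Proof. by move=> [->|->] ni u //; apply: cong_rel u (sbr_xs ni ni _); lia. Qed.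

Lemma swap_Sgi_sx y i : is_sx y -> sb_idx n i -> forall u, Sgi i :: y i :: u ≈ y i :: Sgi i :: u.
Proof.
move=> y_sx ni; change (commutes [:: Sgi i] [:: y i]).
by apply/commutes_Sgi/commutes_sym => //; exact: commutes_sx_Sg.
Qed.

Lemma braid_sx y i : is_sx y -> sb_idx n i -> sb_idx n i.+1 ->
  forall u, Sg i :: Sg i.+1 :: y i :: u ≈ y i.+1 :: Sg i :: Sg i.+1 :: u.
Proof.
move=> [->|->] ni ni1 u.
- exact: cong_rel u (sbr_braid ni ni1).
- exact: cong_rel u (sbr_sx1 ni ni1).
Qed.

Lemma braid_sx_rev y i : is_sx y -> sb_idx n i -> sb_idx n i.+1 ->
  forall u, Sg i.+1 :: Sg i :: y i.+1 :: u ≈ y i :: Sg i.+1 :: Sg i :: u.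
Proof.
move=> [->|->] ni ni1 u.
- by symmetry; apply: cong_rel u (sbr_braid ni ni1).
- exact: cong_rel u (sbr_sx2 ni ni1).
Qed.

Lemma braid_sx_inv y i : is_sx y -> sb_idx n i -> sb_idx n i.+1 ->
  forall u, y i.+1 :: Sgi i :: Sgi i.+1 :: u ≈ Sgi i :: Sgi i.+1 :: y i :: u.
Proof.
move=> y_sx ni ni1 u.
transitivity (Sgi i :: Sgi i.+1 :: Sg i.+1 :: Sg i :: y i.+1 :: Sgi i :: Sgi i.+1 :: u).
  by rewrite Sgi_SgK // Sgi_SgK.
by rewrite braid_sx_rev // Sg_SgiK // Sg_SgiK.
Qed.

Lemma map_SgiK l : all (sb_idx n) l -> forall u, map Sgi l ++ map Sg (rev l) ++ u ≈ u.
Proof.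
elim: l => [_ u // | i l IH /= /andP[ni nl] u].
by rewrite rev_cons -cats1 map_cat -catA IH // Sgi_SgK.
Qed.

Lemma map_SgK l : all (sb_idx n) l -> forall u, map Sg (rev l) ++ map Sgi l ++ u ≈ u.
Proof.
elim: l => [_ u // | i l IH /= /andP[ni nl] u].
by rewrite rev_cons -cats1 map_cat -catA /= Sg_SgiK // IH.
Qed.

Lemma conj_index_valid t s : t <= n -> all (sb_idx n) (iota s.+1 (t - s.+1)).
Proof. by move=> tn; apply/allP => i; rewrite mem_iota /sb_idx; lia. Qed.

Lemma conj_leftK t s : t <= n -> forall u, conj_left t s ++ conj_right t s ++ u ≈ u.
Proof. by move=> tn; apply/map_SgK/conj_index_valid. Qed.

Lemma conj_rightK t s : t <= n -> forall u, conj_right t s ++ conj_left t s ++ u ≈ u.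
Proof. by move=> tn; apply/map_SgiK/conj_index_valid. Qed.

Lemma conjw_cat t s v w : t <= n ->
  forall u, conjw t s v ++ conjw t s w ++ u ≈ conjw t s (v ++ w) ++ u.
Proof. by move=> tn u; rewrite /conjw -!catA conj_rightK. Qed.

Lemma conjw_inv t s v w : t <= n -> (forall u, v ++ w ++ u ≈ u) ->
  forall u, conjw t s v ++ conjw t s w ++ u ≈ u.
Proof. by move=> tn vw u; rewrite conjw_cat // /conjw -!catA vw conj_leftK. Qed.

Lemma conjw_commutes t s v w : t <= n -> commutes v w -> commutes (conjw t s v) (conjw t s w).
Proof. by move=> tn vw u; rewrite !conjw_cat // /conjw -!catA vw. Qed.

Lemma commutes_far_block c t s w : 1 <= s -> t <= n -> all (fun d => s <= sb_index d < t) w ->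
  sb_idx n (sb_index c) -> ((sb_index c).+1 < s) || (t < sb_index c) -> commutes [:: c] w.
Proof.
move=> s1 tn w_st nc cst; apply/commutes_sym/(commutes_all w_st) => d /andP[sd dt].
by apply/commutes_sym/swap_far; rewrite // /far ?/sb_idx; lia.
Qed.

Lemma conjw_sx_index y t s : is_sx y -> s < t ->
  all (fun d => s <= sb_index d < t) (conjw t s [:: y s]).
Proof. by move=> y_sx st; apply: conjw_index; rewrite /= sb_index_sx // leqnn st. Qed.

Lemma swap_conjw_inner z k y t s : is_sx z -> is_sx y -> 1 <= s -> s < k -> k.+1 < t ->
  t <= n -> forall u, z k :: conjw t s [:: y s] ++ u ≈ conjw t s [:: y s] ++ z k :: u.
Proof.
move=> z_sx y_sx s1 sk; move: t; apply: gt_ind => [|t kt IH] tn u /=.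
- have nk : sb_idx n k by idx.
  have nk1 : sb_idx n k.+1 by idx.
  have sk1 : s < k.+1 by exact: ltnW.
  have /(_ (Sgi k :: Sgi k.+1 :: u)) /= zk1_far : commutes [:: z k.+1] (conjw k s [:: y s]).
    by apply: (commutes_far_block s1 _ (conjw_sx_index y_sx sk)); idx.
  (* z_k passes sigma_{k+1} sigma_k as z_{k+1}, which is far from the inner block. *)
  by rewrite !conjwS // -(braid_sx_rev z_sx nk nk1) zk1_far braid_sx_inv.
- have kt' : k < t by exact: ltnW.
  have st : s < t by exact: ltn_trans sk kt'.
  have zk_far (c : sbletter) : sb_index c = t -> forall u, z k :: c :: u ≈ c :: z k :: u.
    by move=> ct; apply: swap_far; rewrite ?sb_index_sx ?ct // /far /sb_idx; lia.
  have /= IHu := IH (ltnW tn) (Sgi t :: u).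
  by rewrite !conjwS // zk_far // IHu zk_far.
Qed.

Lemma swap_conjw c y t s : is_sx y -> 1 <= s -> s < t -> t <= n -> sb_idx n (sb_index c) ->
  [|| (sb_index c).+1 < s, t < sb_index c | (s < sb_index c) && ((sb_index c).+1 < t)] ->
  forall u, c :: conjw t s [:: y s] ++ u ≈ conjw t s [:: y s] ++ c :: u.
Proof.
move=> y_sx s1 st tn nc /or3P[cs|tc|/andP[sc ct]].
- by apply: (commutes_far_block s1 tn (conjw_sx_index y_sx st)); rewrite ?cs.
- by apply: (commutes_far_block s1 tn (conjw_sx_index y_sx st)); rewrite ?tc ?orbT.
case: c nc sc ct => i /= ni si it; [ | apply: commutes_Sgi => // | ];
  exact: swap_conjw_inner.
Qed.

Lemma commutes_sep y z t s r q : is_sx y -> is_sx z -> pair_ok n t s -> pair_ok n r q ->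
  sep t s r q -> commutes (conjw t s [:: y s]) (conjw r q [:: z q]).
Proof.
move=> y_sx z_sx /pair_okP[s1 st tn] /pair_okP[q1 qr rn].
move=> /(sep_cases st qr) /or4P[rs|tq|/andP[qs tr]|/andP[sq rt]]; last first.
  apply/commutes_sym/(commutes_all (conjw_sx_index z_sx qr)) => d /andP[qd dr].
  by apply: (swap_conjw y_sx); idx.
all: apply: (commutes_all (conjw_sx_index y_sx st)) => d /andP[sd dt].
all: by apply: (swap_conjw z_sx); idx.
Qed.

Lemma conjw_peel y t s : is_sx y -> 1 <= s -> s.+1 < t -> t <= n ->
  forall u, conjw t s [:: y s] ++ u ≈ Sgi s :: conjw t s.+1 [:: y s.+1] ++ Sg s :: u.
Proof.
move=> y_sx s1; move: t; apply: gt_ind => [|t st IH] tn u.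
- have ns : sb_idx n s by idx.
  have ns1 : sb_idx n s.+1 by idx.
  rewrite conjwS // !conjw_small //=.
  (* sigma_{s+1} y_s sigma_{s+1}^-1 = sigma_s^-1 y_{s+1} sigma_s by the braid-type relation. *)
  transitivity (Sgi s :: Sg s :: Sg s.+1 :: y s :: Sgi s.+1 :: u); first by rewrite Sgi_SgK.
  by rewrite braid_sx // Sg_SgiK.
rewrite !conjwS ?(ltnW st) // IH 1?ltnW //.
by rewrite (swap_far (c := Sg t) (d := Sgi s)) ?(swap_far (c := Sg s) (d := Sgi t)); try idx.
Qed.

Lemma rel_ts_sr y r s t : is_sx y -> 1 <= r -> r < s -> s < t -> t <= n ->
  forall u, conjw t s [:: Sg s] ++ conjw s r [:: y r] ++ u ≈
            conjw t r [:: y r] ++ conjw t s [:: Sg s] ++ u.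
Proof.
move=> y_sx r1 rs; move: t; apply: gt_ind => [|t st IH] tn u.
  by rewrite conjw_small // conjwS //= Sgi_SgK //; idx.
rewrite !conjwS ?(ltn_trans rs st) //=.
rewrite Sgi_SgK -?IH 1?ltnW //; try idx.
by rewrite (swap_conjw (c := Sgi t) y_sx r1 rs) //; idx.
Qed.

Lemma rel_sr_tr y r s t : is_sx y -> 1 <= r -> r < s -> s < t -> t <= n ->
  forall u, conjw s r [:: Sg r] ++ conjw t r [:: y r] ++ u ≈
            conjw t s [:: y s] ++ conjw s r [:: Sg r] ++ u.
Proof.
move=> y_sx + + st tn; move Ed : (s - r.+1) => d.
elim: d r Ed => [|d IH] r Ed r1 rs u.
  have sr : s = r.+1 by lia.
  by subst s; rewrite conjw_small //= conjw_peel ?Sg_SgiK //; idx.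
rewrite !(conjw_peel _ r1) ?Sg_SgiK ?IH //; try idx.
by rewrite swap_conjw //; idx.
Qed.

Lemma rel_tr_ts_adj y r t : is_sx y -> 1 <= r -> r.+1 < t -> t <= n ->
  forall u, conjw t r [:: Sg r] ++ conjw t r.+1 [:: y r.+1] ++ u ≈
            y r :: conjw t r [:: Sg r] ++ u.
Proof.
move=> y_sx r1; move: t; apply: gt_ind => [|t rt IH] tn u.
  have nr : sb_idx n r by idx.
  have nr1 : sb_idx n r.+1 by idx.
  rewrite !(conjwS _ _ (ltnSn r)) !conjw_small //=.
  by rewrite (swap_Sgi_sx y_sx nr1) (braid_sx_rev y_sx nr nr1).
rewrite !conjwS ?(ltnW rt) //= Sgi_SgK ?IH 1?ltnW //; try idx.
by rewrite (swap_far (c := y r)) //; idx.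
Qed.

Lemma rel_tr_ts y r s t : is_sx y -> 1 <= r -> r < s -> s < t -> t <= n ->
  forall u, conjw t r [:: Sg r] ++ conjw t s [:: y s] ++ u ≈
            conjw s r [:: y r] ++ conjw t r [:: Sg r] ++ u.
Proof.
move=> y_sx + + st tn; move Ed : (s - r.+1) => d.
elim: d r Ed => [|d IH] r Ed r1 rs u.
  have sr : s = r.+1 by lia.
  by subst s; rewrite (conjw_small [:: y r]) // (rel_tr_ts_adj y_sx r1).
rewrite !(conjw_peel _ r1) //; try idx.
by rewrite (swap_conjw (c := Sg r) y_sx) ?IH ?Sg_SgiK //; idx.
Qed.

End SingularBraids.

Lemma phi_cat : {morph phi : u v / u ++ v}.
Proof. by move=> u v; rewrite /phi map_cat flatten_cat. Qed.

Lemma phi_pair c d : phi [:: c; d] = img c ++ img d ++ [::].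
Proof. by []. Qed.

Lemma phi_rel n l l' : ab_rel n l l' -> SBeq n (phi l) (phi l').
Proof.
case=> [t s r q ts rq tsrq | r s t r1 rs st tn | r s t r1 rs st tn | t s ts | t s ts
  | t s r q ts rq tsrq | t s ts | r s t r1 rs st tn | r s t r1 rs st tn
  | r s t r1 rs st tn | t s r q ts rq tsrq];
  rewrite phi_pair ?imgA ?imgAi ?imgB.
- exact: (commutes_sep is_sx_Sg is_sx_Sg ts rq tsrq [::]).
- exact: (rel_ts_sr is_sx_Sg r1 rs st tn [::]).
- exact: (rel_tr_ts is_sx_Sg r1 rs st tn [::]).
- case/pair_okP: ts => s1 st tn; have ns : sb_idx n s by rewrite /sb_idx; lia.
  exact (conjw_inv (v := [:: Sg s]) (w := [:: Sgi s]) s tn (Sg_SgiK ns) [::]).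
- case/pair_okP: ts => s1 st tn; have ns : sb_idx n s by rewrite /sb_idx; lia.
  exact (conjw_inv (v := [:: Sgi s]) (w := [:: Sg s]) s tn (Sgi_SgK ns) [::]).
- exact: (commutes_sep is_sx_Sg is_sx_X ts rq tsrq [::]).
- case/pair_okP: ts => s1 st tn; have ns : sb_idx n s by rewrite /sb_idx; lia.
  exact (conjw_commutes s tn (commutes_sym (commutes_sx_Sg is_sx_X ns)) [::]).
- exact: (rel_ts_sr is_sx_X r1 rs st tn [::]).
- exact: (rel_sr_tr is_sx_X r1 rs st tn [::]).
- exact: (rel_tr_ts is_sx_X r1 rs st tn [::]).
- exact: (commutes_sep is_sx_X is_sx_X ts rq tsrq [::]).
Qed.

Lemma phi_cong n u v : ABeq n u v -> SBeq n (phi u) (phi v).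
Proof. exact: (cong_hom phi_cat (@phi_rel n)). Qed.

Definition psi_letter (c : sbletter) : abletter :=
  match c with Sg i => A i.+1 i | Sgi i => Ai i.+1 i | X i => B i.+1 i end.

Definition psi : seq sbletter -> seq abletter := map psi_letter.

Lemma psi_cat : {morph psi : u v / u ++ v}.
Proof. exact: map_cat. Qed.

Lemma img_psi_letter c : img (psi_letter c) = [:: c].
Proof. by case: c => i; rewrite ?imgA ?imgAi ?imgB conjw_small. Qed.

Lemma phi_psi u : phi (psi u) = u.
Proof. by rewrite /phi /psi -map_comp (eq_map img_psi_letter) flatten_map1 map_id. Qed.

Lemma psi_valid n u : sb_valid n u -> ab_valid n (psi u).
Proof.
elim: u => [//|c u IH] /andP[c_ok u_ok] /=; rewrite IH // andbT.
by case: c c_ok => i; rewrite /= /sb_idx /pair_ok; lia.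
Qed.

Section NewPresentation.
Variable n : nat.
Local Notation "u ≈ v" := (ABeq n u v) (at level 70).
Local Ltac pok := unfold pair_ok, sb_idx, far in *; lia.

Lemma A_AiK t s : pair_ok n t s -> forall u, A t s :: Ai t s :: u ≈ u.
Proof. by move=> ts u; have := cong_rel u (abr_inv1 ts). Qed.

Lemma Ai_AK t s : pair_ok n t s -> forall u, Ai t s :: A t s :: u ≈ u.
Proof. by move=> ts u; have := cong_rel u (abr_inv2 ts). Qed.

Lemma psi_rel l r : sb_rel n l r -> psi l ≈ psi r.
Proof.
case=> [i j ni nj ij | i j ni nj ij | i j ni nj ij | i ni ni1 | i ni ni1 | i ni ni1 | i ni | i ni];
  rewrite /psi /=.
- by apply: (cong_rel [::] (abr_aa _ _ (sep_far ij))); pok.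
- by apply: (cong_rel [::] (abr_bb _ _ (sep_far ij))); pok.
- have [<-|ji] : i = j \/ far j i by pok.
    by symmetry; apply: (cong_rel [::] (abr_ab_same _)); pok.
  by symmetry; apply: (cong_rel [::] (abr_ab _ _ (sep_far ji))); pok.
- transitivity [:: A i.+1 i; A i.+2 i; A i.+2 i.+1].
    by apply: (cong_step [:: A i.+1 i] [::] (@abr_aaa1 n i i.+1 i.+2 _ _ _ _)); pok.
  transitivity [:: A i.+2 i; A i.+2 i.+1; A i.+2 i.+1].
    by symmetry; apply: (cong_rel _ (@abr_aaa2 n i i.+1 i.+2 _ _ _ _)); pok.
  by symmetry; apply: (cong_rel _ (@abr_aaa1 n i i.+1 i.+2 _ _ _ _)); pok.
- transitivity [:: A i.+1 i; B i.+2 i; A i.+2 i.+1].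
    by apply: (cong_step [:: A i.+1 i] [::] (@abr_ab1 n i i.+1 i.+2 _ _ _ _)); pok.
  by apply: (cong_rel _ (@abr_ab2 n i i.+1 i.+2 _ _ _ _)); pok.
- transitivity [:: A i.+2 i; A i.+2 i.+1; B i.+2 i.+1].
    by apply: (cong_rel _ (@abr_aaa1 n i i.+1 i.+2 _ _ _ _)); pok.
  transitivity [:: A i.+2 i; B i.+2 i.+1; A i.+2 i.+1].
    by apply: (cong_step [:: A i.+2 i] [::] (abr_ab_same _)); pok.
  transitivity [:: B i.+1 i; A i.+2 i; A i.+2 i.+1].
    by apply: (cong_rel _ (@abr_ab3 n i i.+1 i.+2 _ _ _ _)); pok.
  by symmetry; apply: (cong_step [:: B i.+1 i] [::] (@abr_aaa1 n i i.+1 i.+2 _ _ _ _)); pok.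
- by apply: (cong_rel [::] (abr_inv1 _)); pok.
- by apply: (cong_rel [::] (abr_inv2 _)); pok.
Qed.

Lemma psi_cong u v : SBeq n u v -> psi u ≈ psi v.
Proof. exact: (cong_hom psi_cat psi_rel). Qed.

Lemma psi_conjwS t s w u : s < t ->
  psi (conjw t.+1 s w) ++ u = A t.+1 t :: psi (conjw t s w) ++ Ai t.+1 t :: u.
Proof. by move=> st; rewrite -[conjw _ _ w]cats0 conjwS // /psi /= map_cat /= -catA. Qed.

Lemma psi_conjw (g : nat -> nat -> abletter) y t s : 1 <= s -> s < t -> t <= n ->
  psi_letter (y s) = g s.+1 s ->
  (forall t, s < t -> t < n -> forall u, A t.+1 t :: g t s :: u ≈ g t.+1 s :: A t.+1 t :: u) ->
  forall u, psi (conjw t s [:: y s]) ++ u ≈ g t s :: u.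
Proof.
move=> s1 + + ys gA; move: t; apply: gt_ind => [|t st IH] tn u.
  by rewrite conjw_small //= ys.
by rewrite psi_conjwS // IH 1?ltnW // gA // A_AiK //; pok.
Qed.

Lemma psi_phi w : ab_valid n w -> psi (phi w) ≈ w.
Proof.
elim: w => [_ | c w IH /andP[c_ok w_ok]]; first exact: cong_refl.
change (psi (img c ++ phi w) ≈ c :: w); rewrite psi_cat IH //.
case: c c_ok => t s /pair_okP[s1 st tn]; rewrite ?imgA ?imgAi ?imgB.
- apply: (psi_conjw (g := A)) => // {}t {}st {}tn u.
  by apply: (cong_rel u (@abr_aaa1 n s t t.+1 _ _ _ _)); lia.
- apply: (psi_conjw (g := Ai)) => // {}t {}st {}tn.
  apply: (@cong_conj_inv _ _ [:: A t.+1 t] [:: A t s] [:: A t.+1 s] [:: Ai t s] [:: Ai t.+1 s])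
    => u.
  + by apply: (cong_rel u (@abr_aaa1 n s t t.+1 _ _ _ _)); lia.
  + by apply: A_AiK; pok.
  + by apply: Ai_AK; pok.
- apply: (psi_conjw (g := B)) => // {}t {}st {}tn u.
  by apply: (cong_rel u (@abr_ab1 n s t t.+1 _ _ _ _)); lia.
Qed.

End NewPresentation.

Unset Implicit Arguments.

Theorem theorem4p1 (n : nat) : 2 <= n ->
  (* phi induces a well-defined and injective map on the presented monoids *)
  (forall w1 w2 : seq abletter, ab_valid n w1 -> ab_valid n w2 ->
     (ABeq n w1 w2 <-> SBeq n (phi w1) (phi w2))) /\
  (* and it is surjective onto SB_n *)
  (forall u : seq sbletter, sb_valid n u ->
     exists w : seq abletter, ab_valid n w /\ SBeq n (phi w) u).
Proof.
move=> _; split.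
- move=> w1 w2 w1_ok w2_ok; split; first exact: phi_cong.
  move=> /psi_cong e.
  exact: cong_trans (cong_sym (psi_phi w1_ok)) (cong_trans e (psi_phi w2_ok)).
- move=> u u_ok; exists (psi u); split; [exact: psi_valid | by rewrite phi_psi].
Qed.
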